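(* Let $S$ be a $D_{1,6}$-polarized Enriques surface and $\mathcal{R}=\{R_1,\ldots,R_{12}\}$ the configuration of twelve smooth rational curves described in the context (with the labeling for which the basis of $\mathrm{Num}(S)$ given there holds). Then the elliptic fibrations in $\mathcal{E}(S,\mathcal{R})$ are: $3$ of type $(2\widetilde{A}_3^{\mathrm{F}})$, $24$ of type $(\widetilde{A}_3^{\mathrm{HF}})$, $32$ of type $(\widetilde{A}_5^{\mathrm{F}})$, $32$ of type $(\widetilde{A}_5^{\mathrm{HF}})$, $12$ of type $(\widetilde{D}_4^{\mathrm{F}})$, $24$ of type $(\widetilde{D}_5^{\mathrm{F}})$, $48$ of type $(\widetilde{D}_6^{\mathrm{F}})$. Moreover $\mathrm{cnd}(S,\mathcal{R})=10$, hence $\mathrm{nd}(S)=10$; an isotropic sequence of classes of half-fibers realizing this is given by the classes of $\tfrac12(R_1+R_2+R_3+R_4)$, $\tfrac12(R_3+R_4+R_5+R_6)$, $\tfrac12(R_5+R_6+R_7+R_8)$, $\tfrac12(R_1+R_3+R_5+R_8+R_9+R_{12})$, $\tfrac12(R_1+R_4+R_5+R_7+R_9+R_{12})$, $\tfrac12(R_1+R_4+R_5+R_8+R_9+R_{11})$, $\tfrac12(R_1+R_3+R_5+R_7+R_9+R_{11})$, $\tfrac12(2R_1+R_3+R_4+R_{11}+R_{12})$, $\tfrac12(R_3+R_4+2R_5+R_7+R_8)$, $\tfrac12(R_7+R_8+2R_9+R_{11}+R_{12})$.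
   Context: Work over $\mathbb{C}$. A $D_{1,6}$-polarized Enriques surface $S$ is the $\mathbb{Z}_2^2$-cover of the blow-up $\mathrm{Bl}_3\mathbb{P}^2$ of $\mathbb{P}^2$ at three non-collinear points with building data $D_a=\ell_1+\ell_1'$, $D_b=\ell_2+\ell_2'$, $D_c=\ell_3+\ell_3'$, where $\ell_i,\ell_i'$ are two distinct smooth fibers of the $i$-th ruling, the six lines having no triple points. The preimage of the six $(-1)$-curves is twelve smooth rational curves $R_1,\ldots,R_{12}$ with dual graph: $R_{2k-1}\cdot R_{2k}=0$, each of $R_{2k-1},R_{2k}$ meets each of $R_{2k+1},R_{2k+2}$ (indices mod $12$) with intersection $1$, no other intersections; the labeling is such that $\mathrm{Num}(S)$ has $\mathbb{Z}$-basis $R_1,R_2,R_3,R_5,R_7,R_9,\tfrac12(R_1+R_3+R_5+R_7+R_9+R_{11}),\tfrac12(R_1+R_2+R_3+R_4),\tfrac12(R_3+R_4+R_5+R_6),\tfrac12(R_5+R_6+R_7+R_8)$. Definitions: $\mathrm{Num}(S)$ = divisors mod numerical equivalence. Half-fibers: the reduced curves $F$ with $2F$ a multiple fiber of an elliptic fibration. $\mathrm{nd}(S)$ = maximal length of a sequence of classes of half-fibers $f_1,\dots,f_m$ with $f_i\cdot f_j=1$ for $i\ne j$. For a finite set $\mathcal{R}$ of smooth rational curves: an $\mathcal{R}$-elliptic cycle is $C=\sum_{R\in\mathcal{R}}a_RR$, $a_R\ge0$, whose support has dual graph an extended Dynkin diagram $\widetilde{A}_n,\widetilde{D}_n,\widetilde{E}_{6,7,8}$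 with $a_R$ the multiplicities of the corresponding Kodaira fiber. Put $c(C)=\tfrac12[C]$ if $\tfrac12[C]\in\mathrm{Num}(S)$ (then $C$ is a fiber) and $c(C)=[C]$ otherwise (then $C$ is a half-fiber). $\mathsf{HF}(S,\mathcal{R})=\{c(C)\}$; $\mathrm{cnd}(S,\mathcal{R})$ = max $m$ with $f_1,\dots,f_m\in\mathsf{HF}(S,\mathcal{R})$, $f_i\cdot f_j=1-\delta_{ij}$; $\mathcal{E}(S,\mathcal{R})$ = set of elliptic fibrations $|2F|$ with $[F]\in\mathsf{HF}(S,\mathcal{R})$. The type of a fibration in $\mathcal{E}(S,\mathcal{R})$ is the formal sum, over the $\mathcal{R}$-elliptic cycles $C$ whose support is (set-theoretically) a fiber of it, of $X^{\mathrm{F}}$ (if $C$ is a fiber) or $X^{\mathrm{HF}}$ (if $C$ is a half-fiber), $X$ being the extended Dynkin type of $C$. *)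

From HB Require Import structures.
From mathcomp Require Import all_boot all_order all_algebra.
Set Implicit Arguments. Unset Strict Implicit. Unset Printing Implicit Defensive.
Import Order.TTheory GRing.Theory Num.Theory.
Local Open Scope ring_scope.

(* R_{2k-1}, R_{2k} form "block" k-1 (0-indexed block = i./2); curves of
   consecutive blocks (mod 6) meet with intersection 1; self-intersection -2;
   no other intersections. *)
Definition adjR (i j : 'I_12) : bool :=
  ((j./2 == (i./2).+1 %% 6) || (i./2 == (j./2).+1 %% 6))%N.

Definition Gint (i j : 'I_12) : int :=
  if i == j then (-2)%Z else if adjR i j then 1%Z else 0%Z.

Definition Gm : 'M[rat]_12 := \matrix_(i, j) (Gint i j)%:~R.

(* Q-divisors supported on the R_i, as row vectors of coefficients. *)
Definition dot (x y : 'rV[rat]_12) : rat := (x *m Gm *m y^T) 0 0.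

(* Numerical equivalence: same intersection number with every R_j
   (the R_j span Num(S) (x) Q). *)
Definition numeq (x y : 'rV[rat]_12) : Prop := (x - y) *m Gm = 0.

(* R_k with k 1-indexed, and 1/2 (R_{k1} + ... + R_{km}) (repetitions allowed). *)
Definition Rv (k : nat) : 'rV[rat]_12 := delta_mx 0 (inord k.-1).
Definition halfR (l : seq nat) : 'rV[rat]_12 := 2^-1 *: \sum_(k <- l) Rv k.

Definition basis_list : seq 'rV[rat]_12 :=
  [:: Rv 1; Rv 2; Rv 3; Rv 5; Rv 7; Rv 9;
      halfR [:: 1; 3; 5; 7; 9; 11]; halfR [:: 1; 2; 3; 4];
      halfR [:: 3; 4; 5; 6]; halfR [:: 5; 6; 7; 8]].
Definition basisv (k : 'I_10) : 'rV[rat]_12 := nth 0 basis_list k.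

Definition vec (a : {ffun 'I_10 -> int}) : 'rV[rat]_12 :=
  \sum_(k < 10) (a k)%:~R *: basisv k.

Definition cdot (a b : {ffun 'I_10 -> int}) : rat := dot (vec a) (vec b).

Definition inNum (x : 'rV[rat]_12) : Prop :=
  exists a : {ffun 'I_10 -> int}, numeq x (vec a).

Inductive DynType := At of nat | Dt of nat | E6t | E7t | E8t.

Definition dyn_eqb (X Y : DynType) : bool :=
  match X, Y with
  | At n, At m => n == m
  | Dt n, Dt m => n == m
  | E6t, E6t | E7t, E7t | E8t, E8t => true
  | _, _ => false
  end.
Lemma dyn_eqP : Equality.axiom dyn_eqb.
Proof.
case=> [n|n|||] [m|m|||] /=; try (by constructor);
  by apply: (iffP eqP) => [->|[]].
Qed.
HB.instance Definition _ := hasDecEq.Build DynType dyn_eqP.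

(* A n = \tilde A_n (n >= 1), Dt n = \tilde D_n (n >= 4), E_k = \tilde E_k. *)
Definition dyn_valid (X : DynType) : bool :=
  match X with At n => (1 <= n)%N | Dt n => (4 <= n)%N | _ => true end.

Definition nv (X : DynType) : nat :=
  match X with At n => n.+1 | Dt n => n.+1 | E6t => 7 | E7t => 8 | E8t => 9 end.

(* edges (as a list; a double edge appears twice, e.g. for \tilde A_1) *)
Definition edges (X : DynType) : seq (nat * nat) :=
  match X with
  | At n => [seq (i, (i.+1 %% n.+1)%N) | i <- iota 0 n.+1]
  | Dt n => [:: (0, 2); (1, 2); (n.-1, n - 2); (n, n - 2)]%N
             ++ [seq (i, i.+1) | i <- iota 2 (n - 4)]
  | E6t => [:: (0, 1); (1, 2); (0, 3); (3, 4); (0, 5); (5, 6)]%N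
  | E7t => [:: (0, 1); (1, 2); (2, 3); (0, 4); (4, 5); (5, 6); (0, 7)]%N
  | E8t => [:: (0, 1); (0, 2); (2, 3); (0, 4); (4, 5); (5, 6); (6, 7); (7, 8)]%N
  end.

Definition mult (X : DynType) (i : nat) : nat :=
  match X with
  | At _ => 1
  | Dt n => if (i <= 1)%N || (n.-1 <= i)%N then 1 else 2
  | E6t => nth 0 [:: 3; 2; 1; 2; 1; 2; 1] i
  | E7t => nth 0 [:: 4; 3; 2; 1; 3; 2; 1; 2] i
  | E8t => nth 0 [:: 6; 3; 4; 2; 5; 4; 3; 2; 1] i
  end.

Definition gram (X : DynType) (i j : 'I_(nv X)) : int :=
  if i == j then (-2)%Z
  else (count (fun e => (e == (i : nat, j : nat)) || (e == (j : nat, i : nat)))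
              (edges X))%:Z.

Definition ellCycle (X : DynType) (C : {ffun 'I_12 -> nat}) : Prop :=
  dyn_valid X /\
  exists phi : 'I_(nv X) -> 'I_12,
    [/\ injective phi,
        (forall i j, Gint (phi i) (phi j) = gram i j),
        (forall i, C (phi i) = mult X i) &
        (forall r, (forall i, phi i != r) -> C r = 0%N)].

Definition cl (C : {ffun 'I_12 -> nat}) : 'rV[rat]_12 := \row_i (C i)%:R.

Definition isFiber (C : {ffun 'I_12 -> nat}) : Prop := inNum (2^-1 *: cl C).

Definition cclass (C : {ffun 'I_12 -> nat}) (f : {ffun 'I_10 -> int}) : Prop :=
  (isFiber C /\ numeq (2^-1 *: cl C) (vec f)) \/
  (~ isFiber C /\ numeq (cl C) (vec f)).

(* f in HF(S,R) ; fibrations in E(S,R) correspond to such classes f (|2F|, [F]=f). *)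
Definition inHF (f : {ffun 'I_10 -> int}) : Prop :=
  exists X C, ellCycle X C /\ cclass C f.

Definition card_is (T : eqType) (P : T -> Prop) (n : nat) : Prop :=
  exists s : seq T, [/\ uniq s, size s = n & forall x, x \in s <-> P x].

(* Type of the fibration with half-fiber class f: a formal sum of X^F / X^HF,
   given as a list of (X, is_fiber) with repetitions. *)
Definition hasType (f : {ffun 'I_10 -> int}) (t : seq (DynType * bool)) : Prop :=
  forall (X : DynType) (b : bool),
    card_is (fun C : {ffun 'I_12 -> nat} =>
               [/\ ellCycle X C, cclass C f & (isFiber C <-> b)])
            (count (pred1 (X, b)) t).

Definition isotropicHF (s : seq {ffun 'I_10 -> int}) : Prop :=
  (forall f, f \in s -> inHF f) /\
  (forall i j, (i < size s)%N -> (j < size s)%N ->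
     cdot (nth [ffun => 0] s i) (nth [ffun => 0] s j) = (i != j)%:R).

Definition cnd_is (n : nat) : Prop :=
  (exists s, isotropicHF s /\ size s = n) /\
  (forall s, isotropicHF s -> (size s <= n)%N).

(* Everything reduces to a finite computation on the dual graph of R_1, ..., R_12.
   An R-elliptic cycle of type X is an embedding of the diagram X into this graph
   preserving intersection numbers, so the cycles are enumerated by extending
   partial embeddings one vertex at a time.  A Q-divisor supported on the R_i is
   determined in Num(S) (x) Q by its intersection numbers with the R_j; if B is the
   matrix of (twice) these numbers for the given basis of Num(S), an integral Q with
   B Q = 4 I recovers the integral coordinates of a class, which decides whether
   1/2 [C] lies in Num(S) and computes c(C).  Grouping the cycles by their classes
   gives the fibrations and their types.  Finally, the Gram matrix J - I of an
   isotropic sequence of length n is invertible for n <> 1, so the sequence spans a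
   subspace of dimension n of Num(S) (x) Q, which has rank 10: hence cnd <= 10, and
   the ten explicit half-fibers give equality. *)

From mathcomp Require Import all_boot all_order all_algebra.
From mathcomp Require Import ring.
Set Implicit Arguments. Unset Strict Implicit. Unset Printing Implicit Defensive.
Import Order.TTheory GRing.Theory Num.Theory.
Local Open Scope ring_scope.

(** * Enumerating R-elliptic cycles *)

Section GramEmbeddings.

Variables (G : nat -> nat -> int) (m : nat) (H : nat -> nat -> int).

Definition gram_embedding (l : seq nat) : Prop :=
  all (fun v => v < m)%N l /\
  forall i j, (i < size l)%N -> (j < size l)%N ->
    G (nth 0%N l i) (nth 0%N l j) = H i j.

Definition extends_embedding (l : seq nat) (v : nat) : bool :=
  (G v v == H (size l) (size l)) &&
  all (fun i => (G (nth 0%N l i) v == H i (size l)) &&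
                (G v (nth 0%N l i) == H (size l) i)) (iota 0 (size l)).

Definition extend_embeddings (ls : seq (seq nat)) : seq (seq nat) :=
  [seq rcons l v | l <- ls, v <- [seq v <- iota 0 m | extends_embedding l v]].

Definition gram_embeddings (n : nat) : seq (seq nat) :=
  iter n extend_embeddings [:: [::]].

Lemma gram_embedding_rcons l v :
  gram_embedding (rcons l v) <->
  [/\ gram_embedding l, (v < m)%N & extends_embedding l v].
Proof.
rewrite /gram_embedding all_rcons size_rcons /extends_embedding.
have nth_old i : (i < size l)%N -> nth 0%N (rcons l v) i = nth 0%N l i.
  by move=> il; rewrite nth_rcons il.
have nth_new : nth 0%N (rcons l v) (size l) = v by rewrite nth_rcons ltnn eqxx.
split=> [[/andP[vm lm] Hl]|[[lm Hl] vm /andP[/eqP Gvv /allP Gv]]].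
  split=> //.
    split=> // i j il jl.
    by have := Hl i j (ltnW il) (ltnW jl); rewrite !nth_old.
  apply/andP; split; first by have := Hl _ _ (ltnSn _) (ltnSn _); rewrite nth_new => ->.
  apply/allP=> i; rewrite mem_iota /= => il.
  have := Hl i _ (ltnW il) (ltnSn _); have := Hl _ i (ltnSn _) (ltnW il).
  by rewrite nth_new nth_old // => -> ->; rewrite !eqxx.
split; first by rewrite vm.
have Gvi k : (k < size l)%N ->
    G (nth 0%N l k) v = H k (size l) /\ G v (nth 0%N l k) = H (size l) k.
  by move=> kl; move: (Gv k); rewrite mem_iota kl => /(_ isT) /andP[/eqP-> /eqP->].
move=> i j; rewrite !ltnS leq_eqVlt => /predU1P[->|il].
  by rewrite leq_eqVlt => /predU1P[->|jl]; rewrite ?nth_new ?nth_old // (Gvi _ jl).2.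
rewrite leq_eqVlt => /predU1P[->|jl]; rewrite ?nth_new ?nth_old //.
- by rewrite (Gvi _ il).1.
- exact: Hl.
Qed.

Lemma mem_gram_embeddings n l :
  l \in gram_embeddings n <-> size l = n /\ gram_embedding l.
Proof.
elim: n l => [|n IHn] l /=.
  by rewrite inE; split=> [/eqP->|[/size0nil->]] //; split=> //; split.
split.
  case/allpairsPdep=> l' [v] [/IHn[sl' El'] + ->].
  rewrite mem_filter mem_iota /= => /andP[ext vm].
  by rewrite size_rcons sl'; split=> //; apply/gram_embedding_rcons.
case: (lastP l) => [[]//|l' v]; rewrite size_rcons => -[[sl']].
case/gram_embedding_rcons=> El' vm ext; apply/allpairsPdep.
by exists l', v; rewrite mem_filter mem_iota ext vm; split=> //; apply/IHn.
Qed.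

End GramEmbeddings.

(* Memoizes [f]: the enumeration evaluates the Gram entries many times under [vm_compute]. *)
Definition tabulate (n : nat) (f : nat -> nat -> int) : nat -> nat -> int :=
  let T := [seq [seq f i j | j <- iota 0 n] | i <- iota 0 n] in
  fun i j => nth 0 (nth [::] T i) j.

Lemma tabulateE n f i j : (i < n)%N -> (j < n)%N -> tabulate n f i j = f i j.
Proof.
move=> i_n j_n; rewrite /tabulate (nth_map 0%N) ?size_iota // nth_iota //.
by rewrite (nth_map 0%N) ?size_iota // nth_iota.
Qed.

Definition curve_dot (i j : nat) : int :=
  if (i == j)%N then (-2)%Z
  else if ((j./2 == (i./2).+1 %% 6) || (i./2 == (j./2).+1 %% 6))%N then 1%Z
  else 0%Z.

Lemma Gint_curve_dot (i j : 'I_12) : Gint i j = curve_dot i j.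
Proof. by []. Qed.

Definition gram_nat (X : DynType) (i j : nat) : int :=
  if (i == j)%N then (-2)%Z
  else (count (fun e => (e == (i, j)) || (e == (j, i))) (edges X))%:Z.

Lemma gram_gram_nat X (i j : 'I_(nv X)) : gram i j = gram_nat X i j.
Proof. by []. Qed.

Definition diagram_embeddings (X : DynType) : seq (seq nat) :=
  gram_embeddings (tabulate 12 curve_dot) 12 (tabulate (nv X) (gram_nat X)) (nv X).

Lemma mem_diagram_embeddings X l :
  l \in diagram_embeddings X <->
  size l = nv X /\ gram_embedding curve_dot 12 (gram_nat X) l.
Proof.
rewrite mem_gram_embeddings /gram_embedding.
split=> -[sl [/allP l12 El]]; (split; [done | split; first exact/allP]);
  move=> i j il jl; have := El i j il jl;
  by rewrite !tabulateE ?l12 ?mem_nth -?sl.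
Qed.

Definition dyn_types : seq DynType :=
  [seq At n | n <- iota 1 11] ++ [seq Dt n | n <- iota 4 8] ++ [:: E6t; E7t; E8t].

Lemma mem_dyn_types X : (X \in dyn_types) = dyn_valid X && (nv X <= 12)%N.
Proof.
have At_inj : injective At by move=> ? ? [].
have Dt_inj : injective Dt by move=> ? ? [].
case: X => [n|n|||];
  rewrite !mem_cat ?(mem_map At_inj) ?(mem_map Dt_inj) ?mem_iota //= !inE /=.
all: by rewrite -[_ == E8t]/false orbF.
Qed.

Definition kodaira_coeffs (X : DynType) (l : seq nat) : seq nat :=
  [seq if r \in l then mult X (index r l) else 0%N | r <- iota 0 12].

Definition toC (c : seq nat) : {ffun 'I_12 -> nat} := [ffun r : 'I_12 => nth 0%N c r].

Lemma toC_kodaira_coeffs X l (r : 'I_12) :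
  toC (kodaira_coeffs X l) r = if val r \in l then mult X (index (val r) l) else 0%N.
Proof. by rewrite ffunE (nth_map 0%N) ?size_iota // nth_iota. Qed.

Lemma toC_inj c d : size c = 12%N -> size d = 12%N -> toC c = toC d -> c = d.
Proof.
move=> sc sd cd; apply: (@eq_from_nth _ 0%N) => [|i]; first by rewrite sc sd.
by rewrite sc => il; have := congr1 (fun C : {ffun 'I_12 -> nat} => C (Ordinal il)) cd; rewrite !ffunE.
Qed.

Lemma ellCycle_embedding X C :
  ellCycle X C -> exists2 l, l \in diagram_embeddings X & C = toC (kodaira_coeffs X l).
Proof.
move=> [_ [phi [phi_inj Gphi Cphi C0]]].
pose l := [seq val (phi i) | i <- enum 'I_(nv X)].
have sl : size l = nv X by rewrite size_map size_enum_ord.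
have nth_l (i : 'I_(nv X)) : nth 0%N l i = phi i.
  by rewrite (nth_map i) ?size_enum_ord // nth_ord_enum.
exists l.
  apply/mem_diagram_embeddings; split=> //; split; first by apply/allP=> _ /mapP[i _ ->]; apply: ltn_ord.
  move=> i j; rewrite sl => il jl.
  by have := Gphi (Ordinal il) (Ordinal jl); rewrite Gint_curve_dot -!nth_l.
apply/ffunP=> r; rewrite toC_kodaira_coeffs.
case: ifPn => [/mapP[i _ ri] | r_notin].
  have -> : r = phi i by apply: val_inj.
  have val_phi_inj : injective (fun j => val (phi j)) by move=> a b /val_inj/phi_inj.
  by rewrite Cphi (index_map val_phi_inj) index_enum_ord.
apply: C0 => i; apply: contraNneq r_notin => <-.
by apply/mapP; exists i; rewrite ?mem_enum.
Qed.

Lemma embedding_ellCycle X l :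
  dyn_valid X -> l \in diagram_embeddings X -> ellCycle X (toC (kodaira_coeffs X l)).
Proof.
move=> vX /mem_diagram_embeddings[sl [/allP l12 El]]; split=> //.
have l_lt (i : 'I_(nv X)) : (nth 0%N l i < 12)%N by rewrite l12 // mem_nth ?sl.
have ul : uniq l.
  apply/(uniqP 0%N) => i j; rewrite !inE => il jl e; apply/eqP/negPn/negP => ne.
  by have := El i j il jl; rewrite e /curve_dot eqxx /gram_nat (negPf ne).
exists (fun i => Ordinal (l_lt i)); split.
- move=> i j /(congr1 val) /= e; apply/val_inj/eqP.
  have ltl (k : 'I_(nv X)) : (k < size l)%N by rewrite sl.
  by rewrite -(nth_uniq 0%N (ltl i) (ltl j) ul) e.
- by move=> i j; rewrite Gint_curve_dot gram_gram_nat El ?sl.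
- by move=> i; rewrite toC_kodaira_coeffs /= mem_nth ?sl // index_uniq ?sl.
move=> r r_notin; rewrite toC_kodaira_coeffs; case: ifP => // rl.
have il : (index (val r) l < nv X)%N by rewrite -sl index_mem.
by have /eqP[] := r_notin (Ordinal il); apply: val_inj; rewrite /= nth_index.
Qed.

Definition elliptic_cycles : seq (DynType * seq nat) :=
  [seq (X, c) | X <- dyn_types,
     c <- undup [seq kodaira_coeffs X l | l <- diagram_embeddings X]].

Lemma mem_elliptic_cycles X c :
  (X, c) \in elliptic_cycles <->
  X \in dyn_types /\ exists2 l, l \in diagram_embeddings X & c = kodaira_coeffs X l.
Proof.
split=> [/allpairsPdep[Y [d [YT + [-> ->]]]] | [XT [l El ->]]].
  by rewrite mem_undup => /mapP[l El ->]; split=> //; exists l.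
by apply/allpairsPdep; exists X, (kodaira_coeffs X l); rewrite mem_undup map_f.
Qed.

Lemma ellCycleP X C : ellCycle X C <-> exists2 c, (X, c) \in elliptic_cycles & C = toC c.
Proof.
split=> [E | [c /mem_elliptic_cycles[XT [l El ->]] ->]].
  have [l El ->] := ellCycle_embedding E.
  exists (kodaira_coeffs X l); last by [].
  apply/mem_elliptic_cycles; split; last by exists l.
  rewrite mem_dyn_types; case: E => -> [phi [phi_inj _ _ _]].
  by have := leq_card phi phi_inj; rewrite !card_ord.
by apply: embedding_ellCycle El; move: XT; rewrite mem_dyn_types => /andP[].
Qed.

(** * Intersection numbers and coordinates in Num(S) *)

Definition sumZ (s : seq int) : int := foldr +%R 0 s.

Lemma big_ord_sumZ n (F : nat -> int) : \sum_(i < n) F i = sumZ (map F (iota 0 n)).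
Proof.
rewrite -(big_mkord xpredT F) /index_iota subn0.
by elim: (iota 0 n) => [|x s IHs]; rewrite ?big_nil ?big_cons ?IHs.
Qed.

Lemma all_iota2 (P : nat -> nat -> bool) m n :
  all (fun i => all (P i) (iota 0 n)) (iota 0 m) ->
  forall i j, (i < m)%N -> (j < n)%N -> P i j.
Proof.
move=> /allP Pmn i j i_m j_n.
have /allP Pi : all (P i) (iota 0 n) by apply: Pmn; rewrite mem_iota add0n i_m.
by apply: Pi; rewrite mem_iota add0n j_n.
Qed.

(* [half_div d] is the Q-divisor 1/2 sum_i d i R_(i+1), and [profile d j] is twice its
   intersection number with R_(j+1). *)
Definition half_div (d : nat -> int) : 'rV[rat]_12 := \row_i ((d i)%:~R / 2).

Definition profile (d : nat -> int) (j : nat) : int :=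
  sumZ [seq d i * curve_dot i j | i <- iota 0 12].

Lemma numeqP x y : numeq x y <-> forall j, (x *m Gm) 0 j = (y *m Gm) 0 j.
Proof.
rewrite /numeq mulmxBl; split=> [/eqP | xy]; last by apply/eqP; rewrite subr_eq0; apply/eqP/rowP.
by rewrite subr_eq0 => /eqP->.
Qed.

Lemma half_div_mulGm d (j : 'I_12) : (half_div d *m Gm) 0 j = (profile d j)%:~R / 2.
Proof.
rewrite mxE /profile -big_ord_sumZ rmorph_sum mulr_suml.
by apply: eq_bigr => i _; rewrite /half_div !mxE Gint_curve_dot rmorphM mulrAC.
Qed.

Lemma dotE x y : dot x y = \sum_j (x *m Gm) 0 j * y 0 j.
Proof. by rewrite /dot mxE; apply: eq_bigr => j _; rewrite [y^T _ _]mxE. Qed.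

Definition curve_count (l : seq nat) (i : nat) : int := (count_mem i.+1 l)%:Z.

Lemma halfR_half_div l : all (fun k => 0 < k <= 12)%N l -> halfR l = half_div (curve_count l).
Proof.
move=> l_in; apply/rowP=> i; rewrite /halfR /curve_count !mxE summxE mulrC; congr (_ * _).
elim: l l_in => [|k l IHl] /=; first by rewrite big_nil.
case/andP=> /andP[k_gt0 k_le12] l_in.
rewrite big_cons IHl // !mxE /= PoszD intrD; congr (_ + _).
have -> : (i == inord k.-1 :> 'I_12) = (k == i.+1)%N.
  rewrite -val_eqE /= inordK; first by rewrite eq_sym -eqSS prednK.
  by rewrite -ltnS prednK.
by case: (k == i.+1).
Qed.

Definition basis_curves : seq (seq nat) :=
  [:: [:: 1; 1]; [:: 2; 2]; [:: 3; 3]; [:: 5; 5]; [:: 7; 7]; [:: 9; 9];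
      [:: 1; 3; 5; 7; 9; 11]; [:: 1; 2; 3; 4]; [:: 3; 4; 5; 6]; [:: 5; 6; 7; 8]]%N.

Definition basis_div (k : nat) : nat -> int := curve_count (nth [::] basis_curves k).

Lemma basisv_half_div (k : 'I_10) : basisv k = half_div (basis_div k).
Proof.
have Rv_halfR n : Rv n = halfR [:: n; n].
  by rewrite /halfR !big_cons big_nil addr0 -mulr2n -scaler_nat scalerA mulVf ?scale1r.
rewrite /basisv (_ : basis_list = map halfR basis_curves) ?(nth_map [::]) //.
  rewrite halfR_half_div //.
  have : all (all (fun n => 0 < n <= 12)%N) basis_curves by [].
  by move/allP; apply; rewrite mem_nth.
by rewrite /basis_list !Rv_halfR.
Qed.

Definition basis_profile (k j : nat) : int := profile (basis_div k) j.

Lemma vec_mulGm a (j : 'I_12) :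
  (vec a *m Gm) 0 j = (\sum_k a k * basis_profile k j)%:~R / 2.
Proof.
rewrite /vec mulmx_suml summxE rmorph_sum mulr_suml; apply: eq_bigr => k _.
by rewrite -scalemxAl mxE basisv_half_div half_div_mulGm rmorphM mulrA.
Qed.

Lemma vec_entry a (i : 'I_12) : vec a 0 i = (\sum_k a k * basis_div k i)%:~R / 2.
Proof.
rewrite /vec summxE rmorph_sum mulr_suml; apply: eq_bigr => k _.
by rewrite mxE basisv_half_div mxE rmorphM mulrA.
Qed.

(* An integral 12 x 10 matrix Q with B Q = 4 I, where B is the 10 x 12 matrix
   [basis_profile]: the coordinates of a class are read off its profile w as w Q / 4. *)
Definition profile_inverse : seq (seq int) :=
 [:: [:: -1; -1; 1; 1; 1; 2; -2; 0; -1; 3]; [:: 0; -2; 1; 1; 1; 2; -2; 0; -1; 3];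
     [:: -1; -1; -1; 0; 0; 1; 0; 1; -1; 2]; [:: 0; 0; 1; 0; 0; 1; 0; -1; -1; 2];
     [:: 0; 1; -1; -2; -1; -1; 2; 0; 1; -1]; [:: -1; 0; -1; 0; -1; -1; 2; 2; -1; -1];
     [:: 0; 1; -1; -1; -2; -2; 2; 1; 1; -2]; [:: 1; 2; -1; -1; 0; -2; 2; -1; 3; -4];
     [:: 1; 1; 0; 0; 0; -2; 0; 0; 2; -2]; [:: 0; 0; 0; 0; 0; 0; 0; 0; 0; 0];
     [:: 1; -1; 2; 2; 2; 2; -4; 0; 0; 2]; [:: 0; 0; 0; 0; 0; 0; 0; 0; 0; 0]]%Z.

Definition inverse_entry (j k : nat) : int := nth 0 (nth [::] profile_inverse j) k.

Lemma basis_profile_inverse_table :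
  all (fun k => all (fun k' =>
    sumZ [seq basis_profile k j * inverse_entry j k' | j <- iota 0 12]
      == if k == k' then 4 else 0) (iota 0 10)) (iota 0 10).
Proof. by vm_compute. Qed.

Lemma basis_profile_inverse (k k' : 'I_10) :
  \sum_(j < 12) basis_profile k j * inverse_entry j k' = if k == k' then 4 else 0.
Proof.
rewrite (big_ord_sumZ 12 (fun j => basis_profile k j * inverse_entry j k')).
exact/eqP/(all_iota2 basis_profile_inverse_table (ltn_ord k) (ltn_ord k')).
Qed.

Definition toF (s : seq int) : {ffun 'I_10 -> int} := [ffun k : 'I_10 => nth 0 s k].

Lemma toF_inj s s' : size s = 10%N -> size s' = 10%N -> toF s = toF s' -> s = s'.
Proof.
move=> ss ss' e; apply: (@eq_from_nth _ 0) => [|k]; first by rewrite ss ss'.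
by rewrite ss => kl; have := congr1 (fun f : {ffun 'I_10 -> int} => f (Ordinal kl)) e; rewrite !ffunE.
Qed.

Definition lattice_profile (s : seq int) (j : nat) : int :=
  sumZ [seq nth 0 s k * basis_profile k j | k <- iota 0 10].

Lemma lattice_profileE s j : \sum_k toF s k * basis_profile k j = lattice_profile s j.
Proof.
rewrite /lattice_profile -(big_ord_sumZ 10 (fun k => nth 0 s k * basis_profile k j)).
by apply: eq_bigr => k _; rewrite ffunE.
Qed.

Definition coords (w : nat -> int) : seq int :=
  [seq (sumZ [seq w j * inverse_entry j k | j <- iota 0 12] %/ 4)%Z | k <- iota 0 10].

Definition in_lattice (w : nat -> int) : bool :=
  let a := coords w in all (fun j => lattice_profile a j == w j) (iota 0 12).

Lemma coords_unique (a : {ffun 'I_10 -> int}) (w : nat -> int) :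
  (forall j : 'I_12, \sum_k a k * basis_profile k j = w j) -> a = toF (coords w).
Proof.
move=> aw; apply/ffunP=> k'; rewrite ffunE (nth_map 0%N) ?size_iota // nth_iota //.
suff -> : sumZ [seq w j * inverse_entry j k' | j <- iota 0 12] = 4 * a k' by rewrite mulKz.
rewrite -(big_ord_sumZ 12 (fun j => w j * inverse_entry j k')).
under eq_bigr do rewrite -aw mulr_suml.
rewrite exchange_big /=.
under eq_bigr do (under eq_bigr do rewrite -mulrA; rewrite -mulr_sumr basis_profile_inverse).
by rewrite (bigD1 k') //= eqxx big1 ?addr0 1?mulrC // => k /negPf->; rewrite mulr0.
Qed.

Lemma in_latticeP (w : nat -> int) :
  reflect (exists a : {ffun 'I_10 -> int},
             forall j : 'I_12, \sum_k a k * basis_profile k j = w j)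
          (in_lattice w).
Proof.
apply: (iffP allP) => [a_ok | [a aw] j].
  by exists (toF (coords w)) => j; rewrite lattice_profileE; apply/eqP/a_ok; rewrite mem_iota ltn_ord.
rewrite mem_iota => /andP[_ jl]; have := aw (Ordinal jl).
by rewrite (coords_unique aw) lattice_profileE => ->.
Qed.

Lemma in_lattice_coords (w : nat -> int) :
  in_lattice w -> forall j : 'I_12, \sum_k toF (coords w) k * basis_profile k j = w j.
Proof. by case/in_latticeP=> a aw; rewrite -(coords_unique aw). Qed.

Lemma numeq_half_div_vec d a :
  numeq (half_div d) (vec a) <->
  forall j : 'I_12, \sum_k a k * basis_profile k j = profile d j.
Proof.
rewrite numeqP; split=> E j; last by rewrite half_div_mulGm vec_mulGm E.
by have := E j; rewrite half_div_mulGm vec_mulGm => /(mulIf _)/intr_inj ->.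
Qed.

(** * Classes of cycles and types of fibrations *)

Definition cycle_weights (c : seq nat) (i : nat) : int := (nth 0%N c i)%:Z.

Lemma half_cl_toC c : 2^-1 *: cl (toC c) = half_div (cycle_weights c).
Proof. by apply/rowP=> i; rewrite !mxE ffunE mulrC. Qed.

Lemma cl_toC c : cl (toC c) = half_div (fun i => 2 * cycle_weights c i).
Proof. by apply/rowP=> i; rewrite !mxE ffunE intrM mulrAC divff ?mul1r. Qed.

Definition cycle_class (c : seq nat) : seq int * bool :=
  if in_lattice (profile (cycle_weights c)) then (coords (profile (cycle_weights c)), true)
  else (coords (profile (fun i => 2 * cycle_weights c i)), false).

Lemma isFiber_cycle_class c : isFiber (toC c) <-> (cycle_class c).2.
Proof.
rewrite /isFiber /inNum half_cl_toC /cycle_class.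
case: in_latticeP => [[a Ha] | noa] /=.
  by split=> // _; exists a; apply/numeq_half_div_vec.
by split=> // -[a /numeq_half_div_vec Ha]; case: noa; exists a.
Qed.

Lemma cclass_cycle_class c f :
  in_lattice (profile (fun i => 2 * cycle_weights c i)) ->
  (cclass (toC c) f <-> f = toF (cycle_class c).1).
Proof.
move=> half_class; rewrite /cclass isFiber_cycle_class.
rewrite half_cl_toC cl_toC !numeq_half_div_vec /cycle_class.
case: ifP => [fiber | _] /=.
  split=> [[[_ /coords_unique //] | [/(_ isT)]] // | ->].
  by left; split=> //; apply: in_lattice_coords.
split=> [[[] // | [_ /coords_unique //]] | ->].
by right; split=> //; apply: in_lattice_coords.
Qed.

Definition cycle_table : seq (DynType * (seq int * bool)) :=
  [seq (p.1, cycle_class p.2) | p <- elliptic_cycles].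

Definition hf_classes : seq (seq int) := undup [seq q.2.1 | q <- cycle_table].

Definition fibration_type (s : seq int) : seq (DynType * bool) :=
  [seq (q.1, q.2.2) | q <- cycle_table & q.2.1 == s].

Lemma uniq_elliptic_cycles : uniq elliptic_cycles.
Proof. by vm_compute. Qed.

Lemma elliptic_cycles_in_Num :
  all (fun p => in_lattice (profile (fun i => 2 * cycle_weights p.2 i))) elliptic_cycles.
Proof. by vm_compute. Qed.



Lemma size_elliptic_cycle X c : (X, c) \in elliptic_cycles -> size c = 12%N.
Proof. by case/mem_elliptic_cycles=> _ [l _ ->]; rewrite size_map size_iota. Qed.

Lemma size_cycle_class c : size (cycle_class c).1 = 10%N.
Proof. by rewrite /cycle_class; case: ifP; rewrite size_map size_iota. Qed.

Lemma cclass_elliptic_cycle X c f :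
  (X, c) \in elliptic_cycles -> (cclass (toC c) f <-> f = toF (cycle_class c).1).
Proof. by move=> Xc; apply: cclass_cycle_class; apply: (allP elliptic_cycles_in_Num _ Xc). Qed.

Definition cycles_of_class X b s : seq {ffun 'I_12 -> nat} :=
  [seq toC p.2 | p <- elliptic_cycles & (p.1 == X) && (cycle_class p.2 == (s, b))].

Lemma mem_cycles_of_class X b s C : size s = 10%N ->
  C \in cycles_of_class X b s <-> [/\ ellCycle X C, cclass C (toF s) & (isFiber C <-> b)].
Proof.
move=> ss; split.
  case/mapP=> -[Y c]; rewrite mem_filter /= => /andP[/andP[/eqP-> /eqP cls] Xc] ->.
  split; first by apply/ellCycleP; exists c.
    by apply/(cclass_elliptic_cycle _ Xc); rewrite cls.
  by rewrite isFiber_cycle_class cls; case: b {cls Xc}.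
case=> /ellCycleP[c Xc ->] /(cclass_elliptic_cycle _ Xc) cls fib.
have fib_b : (cycle_class c).2 = b.
  by apply/idP/idP => [/isFiber_cycle_class/fib | /fib/isFiber_cycle_class].
apply/mapP; exists (X, c); last by [].
rewrite mem_filter Xc andbT eqxx /=.
move: cls fib_b (size_cycle_class c) {fib Xc}; case: cycle_class => s' b' /= cls <- ss'.
by rewrite (toF_inj ss ss' cls).
Qed.

Lemma count_fibration_type X b s :
  count (pred1 (X, b)) (fibration_type s) = size (cycles_of_class X b s).
Proof.
rewrite size_map size_filter /fibration_type /cycle_table count_map count_filter count_map.
apply: eq_count => -[Y c] /=; case: cycle_class => s' b'.
by rewrite /= !xpair_eqE -andbA [(b' == b) && _]andbC.
Qed.

Lemma uniq_cycles_of_class X b s : uniq (cycles_of_class X b s).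
Proof.
rewrite map_inj_in_uniq; first exact: filter_uniq uniq_elliptic_cycles.
move=> -[Y c] [Z d].
rewrite [(Y, c) \in _]mem_filter [(Z, d) \in _]mem_filter /=.
move=> /andP[/andP[/eqP-> _] Yc] /andP[/andP[/eqP-> _] Zd] cd.
congr (_, _); exact: toC_inj (size_elliptic_cycle Yc) (size_elliptic_cycle Zd) cd.
Qed.

Lemma card_is_unique (T : eqType) (P : T -> Prop) n m :
  card_is P n -> card_is P m -> n = m.
Proof.
move=> [s [us <- Ps]] [s' [us' <- Ps']]; apply: perm_size; apply: uniq_perm => // x.
by apply/idP/idP => x_in; [apply/Ps'/Ps | apply/Ps/Ps'].
Qed.

Lemma card_is_cycles_of_class X (b : bool) s : size s = 10%N ->
  card_is (fun C => [/\ ellCycle X C, cclass C (toF s) & (isFiber C <-> b)])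
          (count (pred1 (X, b)) (fibration_type s)).
Proof.
move=> ss; exists (cycles_of_class X b s).
rewrite count_fibration_type; split; [exact: uniq_cycles_of_class | by [] | move=> C].
exact: mem_cycles_of_class.
Qed.

Lemma hasType_fibration_type s t :
  size s = 10%N -> hasType (toF s) t <-> perm_eq (fibration_type s) t.
Proof.
move=> ss; split=> [Ht | /permP ft X b]; last by rewrite -ft; apply: card_is_cycles_of_class.
apply/allP=> -[X b] _; apply/eqP.
exact: card_is_unique (card_is_cycles_of_class X b ss) (Ht X b).
Qed.

Lemma inHF_hf_classes f : inHF f <-> exists2 s, s \in hf_classes & f = toF s.
Proof.
split=> [[X [C [/ellCycleP[c Xc ->] /(cclass_elliptic_cycle _ Xc) ->]]] | [s + ->]].
  exists (cycle_class c).1; last by [].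
  rewrite mem_undup; apply/mapP; exists (X, cycle_class c); last by [].
  by rewrite /cycle_table; apply: (map_f (fun p => (p.1, cycle_class p.2)) Xc).
rewrite mem_undup /cycle_table => /mapP[_ /mapP[[X c] Xc ->] ->] /=.
exists X, (toC c); split; first by apply/ellCycleP; exists c.
exact/(cclass_elliptic_cycle _ Xc).
Qed.

Lemma size_hf_class s : s \in hf_classes -> size s = 10%N.
Proof. by rewrite mem_undup /cycle_table => /mapP[_ /mapP[p _ ->] ->]; apply: size_cycle_class. Qed.

Lemma card_is_classes_of_type t :
  card_is (fun f => inHF f /\ hasType f t)
          (count (fun s => perm_eq (fibration_type s) t) hf_classes).
Proof.
exists [seq toF s | s <- hf_classes & perm_eq (fibration_type s) t]; split.
- rewrite map_inj_in_uniq; first exact: filter_uniq (undup_uniq _).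
  move=> s s'; rewrite [s \in _]mem_filter [s' \in _]mem_filter.
  by move=> /andP[_ /size_hf_class ss] /andP[_ /size_hf_class ss']; apply: toF_inj.
- by rewrite size_map size_filter.
move=> f; split=> [/mapP[s] | [/inHF_hf_classes[s hs ->]]].
  rewrite [s \in _]mem_filter => /andP[ft hs] ->.
  split; first by apply/inHF_hf_classes; exists s.
  exact/(hasType_fibration_type _ (size_hf_class hs)).
move/(hasType_fibration_type _ (size_hf_class hs)) => ft.
apply/mapP; exists s; last by [].
by rewrite [s \in _]mem_filter; apply/andP; split; [exact: ft | exact: hs].
Qed.

(** * Isotropic sequences *)

Lemma unitmx_J_sub_I (R : numFieldType) n :
  n != 1%N -> (const_mx 1 - 1%:M : 'M[R]_n) \in unitmx.
Proof.
move=> n_neq1; set J : 'M[R]_n := const_mx 1.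
have JJ : J *m J = n%:R *: J.
  apply/matrixP=> i j; rewrite !mxE (eq_bigr (fun _ => 1)) => [|k _]; last by rewrite !mxE mulr1.
  by rewrite sumr_const card_ord mulr1.
have n1_neq0 : (n%:R - 1 : R) != 0 by rewrite subr_eq0 pnatr_eq1.
suff /mulmx1_unit[] : (J - 1%:M) *m ((n%:R - 1)^-1 *: J - 1%:M) = 1%:M by [].
rewrite mulmxBl !mulmxBr -scalemxAr JJ scalerA !mulmx1 !mul1mx.
rewrite opprB addrA addrAC -[J in _ - J - _]scale1r -!scalerBl.
have -> : (n%:R - 1)^-1 * n%:R - 1 - (n%:R - 1)^-1 = 0 :> R by field.
by rewrite scale0r add0r.
Qed.

Lemma rank_gram_J_sub_I (R : numFieldType) n p (V : 'M[R]_(n, p)) (G : 'M_p) :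
  n != 1%N -> V *m G *m V^T = const_mx 1 - 1%:M -> (n <= \rank V)%N.
Proof.
move=> n_neq1 VGV; have := mxrankM_maxl (V *m G) V^T.
rewrite VGV mxrank_unit ?unitmx_J_sub_I // => /leq_trans; apply; exact: mxrankM_maxl.
Qed.

Lemma isotropicHF_size s : isotropicHF s -> (size s <= 10)%N.
Proof.
case=> _ iso; rewrite leqNgt; apply/negP => s_gt10.
pose f (i : 'I_11) := nth [ffun => 0] s i.
pose A : 'M[rat]_(11, 10) := \matrix_(i, k) (f i k)%:~R.
pose B : 'M[rat]_(10, 12) := \matrix_(k, j) basisv k 0 j.
have rowAB i : row i (A *m B) = vec (f i).
  apply/rowP=> j; rewrite !mxE /vec summxE; apply: eq_bigr => k _; rewrite !mxE.
  by [].
have gramAB : A *m B *m Gm *m (A *m B)^T = const_mx 1 - 1%:M.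
  apply/matrixP=> i j.
  have -> : (A *m B *m Gm *m (A *m B)^T) i j = dot (vec (f i)) (vec (f j)).
    rewrite -!rowAB /dot tr_row -!row_mul [RHS]mxE [RHS]mxE mxE.
    by apply: eq_bigr => k _; rewrite [col _ _ _ _]mxE.
  have il (k : 'I_11) : (k < size s)%N := leq_trans (ltn_ord k) s_gt10.
  rewrite -[dot _ _]/(cdot (f i) (f j)) iso ?il // !mxE.
  have -> : (i != j :> nat) = (i != j) by [].
  by case: (i == j); rewrite ?mulr1n ?mulr0n ?subrr ?subr0.
have := @rank_gram_J_sub_I _ 11 _ _ _ isT gramAB.
by rewrite ltnNge (leq_trans (mxrankM_maxl _ _) (rank_leq_col A)).
Qed.

Lemma numeq_sym x y : numeq x y <-> numeq y x.
Proof. by rewrite !numeqP; split=> xy j; rewrite xy. Qed.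

Definition lattice_div (s : seq int) (i : nat) : int :=
  sumZ [seq nth 0 s k * basis_div k i | k <- iota 0 10].

Definition lattice_dot (s s' : seq int) : int :=
  sumZ [seq lattice_profile s j * lattice_div s' j | j <- iota 0 12].

Lemma cdot_toF s s' : cdot (toF s) (toF s') = (lattice_dot s s')%:~R / 4.
Proof.
rewrite /cdot dotE /lattice_dot -(big_ord_sumZ 12 (fun j => lattice_profile s j * lattice_div s' j)).
rewrite rmorph_sum mulr_suml; apply: eq_bigr => j _.
rewrite vec_mulGm lattice_profileE vec_entry /lattice_div.
rewrite -(big_ord_sumZ 10 (fun k => nth 0 s' k * basis_div k j)).
under [X in _ * (X%:~R / _)]eq_bigr do rewrite ffunE.
by rewrite rmorphM; field.
Qed.

Definition isotropic_curves : seq (seq nat) :=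
  [:: [:: 1; 2; 3; 4]; [:: 3; 4; 5; 6]; [:: 5; 6; 7; 8];
      [:: 1; 3; 5; 8; 9; 12]; [:: 1; 4; 5; 7; 9; 12];
      [:: 1; 4; 5; 8; 9; 11]; [:: 1; 3; 5; 7; 9; 11];
      [:: 1; 1; 3; 4; 11; 12]; [:: 3; 4; 5; 5; 7; 8];
      [:: 7; 8; 9; 9; 11; 12]]%N.

Definition isotropic_classes : seq (seq int) :=
  [seq coords (profile (curve_count l)) | l <- isotropic_curves].

Lemma isotropic_curves_in_lattice :
  all (fun l => all (fun k => 0 < k <= 12)%N l && in_lattice (profile (curve_count l)))
      isotropic_curves.
Proof. by vm_compute. Qed.

Lemma isotropic_classes_in_hf_classes : all (mem hf_classes) isotropic_classes.
Proof. by vm_compute. Qed.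

Lemma isotropic_classes_gram :
  all (fun i => all (fun j =>
    lattice_dot (nth [::] isotropic_classes i) (nth [::] isotropic_classes j)
      == if i == j then 0 else 4) (iota 0 10)) (iota 0 10).
Proof. by vm_compute. Qed.

Lemma isotropic_classes_halfR i : (i < 10)%N ->
  numeq (vec (nth [ffun => 0] (map toF isotropic_classes) i)) (nth 0 (map halfR isotropic_curves) i).
Proof.
move=> i_lt10; have /andP[l_ok l_lat] := all_nthP [::] isotropic_curves_in_lattice i i_lt10.
have i_lt : (i < size isotropic_curves)%N by [].
rewrite (nth_map [::] _ _ i_lt) (nth_map [::] _ _ (i_lt : i < size isotropic_classes)%N).
rewrite /isotropic_classes (nth_map [::] _ _ i_lt).
apply/numeq_sym; rewrite halfR_half_div; last exact: l_ok.
by apply/numeq_half_div_vec; apply: in_lattice_coords.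
Qed.

Lemma isotropicHF_isotropic_classes : isotropicHF (map toF isotropic_classes).
Proof.
split=> [_ /mapP[s s_in ->] | i j].
  apply/inHF_hf_classes; exists s; last by [].
  exact: (allP isotropic_classes_in_hf_classes s s_in).
rewrite size_map => il jl; rewrite (nth_map [::] _ _ il) (nth_map [::] _ _ jl) cdot_toF.
rewrite (eqP (all_iota2 isotropic_classes_gram il jl)).
by case: (i == j) => /=; field.
Qed.

Definition fibration_types : seq (seq (DynType * bool)) :=
  [:: [:: (At 3, true); (At 3, true)]; [:: (At 3, false)]; [:: (At 5, true)];
      [:: (At 5, false)]; [:: (Dt 4, true)]; [:: (Dt 5, true)]; [:: (Dt 6, true)]].

Lemma hf_classes_types : all (fun s => has (perm_eq (fibration_type s)) fibration_types) hf_classes.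
Proof. by vm_compute. Qed.

Lemma fibration_type_census :
  [seq (t, count (fun s => perm_eq (fibration_type s) t) hf_classes) | t <- fibration_types]
  = zip fibration_types [:: 3; 24; 32; 32; 12; 24; 48]%N.
Proof. by vm_compute. Qed.

Lemma card_is_census t n :
  (t, n) \in zip fibration_types [:: 3; 24; 32; 32; 12; 24; 48]%N ->
  card_is (fun f => inHF f /\ hasType f t) n.
Proof.
rewrite -fibration_type_census => /mapP[t' _ tn].
rewrite (congr1 fst tn : t = t') (congr1 snd tn : n = _).
exact: card_is_classes_of_type.
Qed.

Theorem proposition5p5 :
  (card_is (fun f => inHF f /\ hasType f [:: (At 3, true); (At 3, true)]) 3 /\
      card_is (fun f => inHF f /\ hasType f [:: (At 3, false)]) 24 /\
      card_is (fun f => inHF f /\ hasType f [:: (At 5, true)]) 32 /\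
      card_is (fun f => inHF f /\ hasType f [:: (At 5, false)]) 32 /\
      card_is (fun f => inHF f /\ hasType f [:: (Dt 4, true)]) 12 /\
      card_is (fun f => inHF f /\ hasType f [:: (Dt 5, true)]) 24 /\
      card_is (fun f => inHF f /\ hasType f [:: (Dt 6, true)]) 48) /\
  (forall f, inHF f ->
     (hasType f [:: (At 3, true); (At 3, true)] \/
         hasType f [:: (At 3, false)] \/
         hasType f [:: (At 5, true)] \/
         hasType f [:: (At 5, false)] \/
         hasType f [:: (Dt 4, true)] \/
         hasType f [:: (Dt 5, true)] \/
         hasType f [:: (Dt 6, true)])) /\
  cnd_is 10 /\
  (exists s : seq {ffun 'I_10 -> int},
     isotropicHF s /\
     size s = 10%N /\
     forall i : nat, (i < 10)%N ->
       numeq (vec (nth [ffun => 0] s i))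
         (nth 0
           [:: halfR [:: 1; 2; 3; 4]; halfR [:: 3; 4; 5; 6]; halfR [:: 5; 6; 7; 8];
               halfR [:: 1; 3; 5; 8; 9; 12]; halfR [:: 1; 4; 5; 7; 9; 12];
               halfR [:: 1; 4; 5; 8; 9; 11]; halfR [:: 1; 3; 5; 7; 9; 11];
               halfR [:: 1; 1; 3; 4; 11; 12]; halfR [:: 3; 4; 5; 5; 7; 8];
               halfR [:: 7; 8; 9; 9; 11; 12]] i)).
Proof.
split; [|split; [|split]].
- by split; [|split; [|split; [|split; [|split; [|split]]]]]; apply: card_is_census.
- move=> f /inHF_hf_classes[s hs ->]; rewrite !(hasType_fibration_type _ (size_hf_class hs)).
  case/hasP: (allP hf_classes_types s hs) => t; rewrite !inE.
  do 6![case/orP=> [/eqP-> type_s | t_rest type_s]; [by left | right; move: t_rest type_s]].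
  by move/eqP->.
- split; last exact: isotropicHF_size.
  exists (map toF isotropic_classes); split; first exact: isotropicHF_isotropic_classes.
  by rewrite size_map.
exists (map toF isotropic_classes); split; first exact: isotropicHF_isotropic_classes.
by split=> [|i]; [rewrite size_map | exact: isotropic_classes_halfR].
Qed.
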